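(* Let $p\ge5$ be a prime, let $a$ be a positive integer with $\gcd(a,p)=1$, and let $r\ge0$, $m\ge1$ be integers. Let $b_{4,r,a,m}(n)$ be the number of partitions of $n$ in which every multiplicity has the form $j(pr+a)+pk$ with $j\in\{0,1,2,3\}$ and $0\le k\le m-1$. Let $t$ be an integer such that $8ta^{-1}+1$ is a quadratic nonresidue modulo $p$, where $a^{-1}$ is the inverse of $a$ modulo $p$. Then $b_{4,r,a,m}(pn+t)\equiv0\pmod2$ for all $n\ge0$.
   Context: Multiplicity of a part means the number of times it appears in the partition. Equivalently, $\sum_{n\ge0}b_{4,r,a,m}(n)q^n=\prod_{n\ge1}\frac{(1-q^{4(pr+a)n})(1-q^{pmn})}{(1-q^{(pr+a)n})(1-q^{pn})}$. *)

From mathcomp Require Import all_boot all_order all_algebra.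
Set Implicit Arguments. Unset Strict Implicit. Unset Printing Implicit Defensive.

Definition admissible_mult (p r a m c : nat) : bool :=
  [exists j : 'I_4, exists k : 'I_m, c == j * (p * r + a) + p * k].

(* A partition of n is encoded by its multiplicity function:
   f i = multiplicity of the part (i+1), for 1 <= i+1 <= n (each multiplicity
   is at most n), subject to sum_i (i+1) * f i = n.
   b4 p r a m n = number of partitions of n all of whose multiplicities
   (including the zero multiplicity of absent parts) are admissible. *)
Definition b4 (p r a m n : nat) : nat :=
  #|[set f : {ffun 'I_n -> 'I_n.+1} |
      (\sum_(i < n) (i.+1) * f i == n) &&
      [forall i, admissible_mult p r a m (f i)]]|.

Definition b4z (p r a m : nat) (z : int) : nat :=
  match z with Posz n => b4 p r a m n | Negz _ => 0 end.

(* Modulo 2 we have 1 + y + y^2 + y^3 = (1 - y)(1 - y^2), so the generating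
   function of b4 is C(q^(pr+a)) D(q^p) with
     C(q) = (q;q)(q^2;q^2) = (q;q^2)(q^2;q^2)^2 = (q;q^2)(q^4;q^4)   (mod 2).
   By the Jacobi triple product (base q^4, z = q^3) the last product is the
   series of the q^(2c^2+c), c in Z.  Hence if b4(N) is odd then
   N = s(pr+a) + up with s = 2c^2 + c, so N = a(2c^2 + c) (mod p) and
   8N/a + 1 = (4c + 1)^2 is a square mod p.  Infinite products are replaced by
   polynomials agreeing with them up to the relevant degree, and the triple
   product by its finite form, the q-binomial expansion of jacobi_poly. *)

From mathcomp Require Import all_boot all_order all_algebra.
From mathcomp Require Import zify ring.
Set Implicit Arguments. Unset Strict Implicit. Unset Printing Implicit Defensive.
Import GRing.Theory.
Local Open Scope ring_scope.

Lemma sumr_neq0_exists (V : nmodType) (I : finType) (F : I -> V) :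
  \sum_i F i != 0 -> exists i, F i != 0.
Proof.
move=> nz; apply/existsP; apply: contraNT nz => /existsPn allz.
by rewrite big1 // => i _; apply/eqP/negbNE/allz.
Qed.

Lemma big_ord_double (R : Type) (idx : R) (op : Monoid.law idx) n (F : nat -> R) :
  \big[op/idx]_(i < n.*2) F i = \big[op/idx]_(i < n) op (F i.*2) (F i.*2.+1).
Proof.
elim: n => [|n IH]; first by rewrite !big_ord0.
by rewrite doubleS !big_ord_recr IH /= Monoid.mulmA.
Qed.

Section TruncatedEquality.
Context {R : nzRingType}.
Implicit Types p q : {poly R}.

Definition eq_upto (M : nat) p q := forall k, (k <= M)%N -> p`_k = q`_k.

Lemma eq_upto_sym M p q : eq_upto M p q -> eq_upto M q p.
Proof. by move=> pq k kM; rewrite pq. Qed.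

Lemma eq_uptoD M p p' q q' :
  eq_upto M p p' -> eq_upto M q q' -> eq_upto M (p + q) (p' + q').
Proof. by move=> pp' qq' k kM; rewrite !coefD pp' ?qq'. Qed.

Lemma eq_uptoM M p p' q q' :
  eq_upto M p p' -> eq_upto M q q' -> eq_upto M (p * q) (p' * q').
Proof.
move=> pp' qq' k kM; rewrite !coefM; apply: eq_bigr => -[j /= jk] _.
by rewrite pp' ?qq' ?(leq_trans _ kM) ?leq_subr.
Qed.

Lemma eq_upto_sum M I (r : seq I) (P : pred I) (F G : I -> {poly R}) :
  (forall i, P i -> eq_upto M (F i) (G i)) ->
  eq_upto M (\sum_(i <- r | P i) F i) (\sum_(i <- r | P i) G i).
Proof. by move=> FG; apply: big_ind2 => // *; apply: eq_uptoD. Qed.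

Lemma eq_upto_prod M I (r : seq I) (P : pred I) (F G : I -> {poly R}) :
  (forall i, P i -> eq_upto M (F i) (G i)) ->
  eq_upto M (\prod_(i <- r | P i) F i) (\prod_(i <- r | P i) G i).
Proof. by move=> FG; apply: big_ind2 => // *; apply: eq_uptoM. Qed.

Lemma eq_upto_1subXn M d : (M < d)%N -> eq_upto M (1 - 'X^d) 1.
Proof.
move=> Md k kM; rewrite coefB coefXn.
by rewrite ltn_eqF ?subr0 // (leq_ltn_trans kM Md).
Qed.

End TruncatedEquality.

Lemma bin2_double n : ('C(n, 2) * 2 = n * n.-1)%N.
Proof.
by elim: n => // n IH; rewrite binS bin1 mulnDl IH; case: n {IH} => //= n; lia.
Qed.

(* Only one of the two binomials is nonzero; in Z, tri_exp m k = (k - m)(k - m - 1)/2. *)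
Definition tri_exp (m k : nat) : nat := 'C(k - m, 2) + 'C(m.+1 - k, 2).

Lemma tri_exp_double m k :
  (tri_exp m k * 2)%:Z = (k%:Z - m%:Z) * (k%:Z - m%:Z - 1).
Proof. by rewrite /tri_exp mulnDl !bin2_double; nia. Qed.

Lemma tri_expSS m k : tri_exp m.+1 k.+1 = tri_exp m k.
Proof. by rewrite /tri_exp !subSS. Qed.

Lemma tri_expS0 m : tri_exp m.+1 0 = (tri_exp m 0 + m.+1)%N.
Proof. by have := tri_exp_double m 0; have := tri_exp_double m.+1 0; lia. Qed.

Lemma tri_expS m k : (tri_exp m k.+1 + m = tri_exp m k + k)%N.
Proof. by have := tri_exp_double m k; have := tri_exp_double m k.+1; lia. Qed.

Section QBinomial.
Context {R : comNzRingType} (Q : R).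

Fixpoint qbinom (N k : nat) : R :=
  match N, k with
  | 0, _ => (k == 0)%:R
  | N.+1, 0 => 1
  | N.+1, k.+1 => qbinom N k + Q ^+ k.+1 * qbinom N k.+1
  end.

Lemma qbinomn0 N : qbinom N 0 = 1.
Proof. by case: N. Qed.

Lemma qbinomSS N k : qbinom N.+1 k.+1 = qbinom N k + Q ^+ k.+1 * qbinom N k.+1.
Proof. by []. Qed.

Lemma qbinom_small N k : (N < k)%N -> qbinom N k = 0.
Proof.
elim: N k => [|N IH] [|k] //= Nk.
by rewrite !IH ?mulr0 ?addr0 // ltnW.
Qed.

Lemma qbinomnn N : qbinom N N = 1.
Proof. by elim: N => // N IH; rewrite qbinomSS IH qbinom_small ?mulr0 ?addr0. Qed.

Lemma qbinomSS_rev N k :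
  qbinom N.+1 k.+1 = Q ^+ (N - k) * qbinom N k + qbinom N k.+1.
Proof.
elim: N k => [|N IH] k.
  by case: k => [|k] /=; rewrite ?expr0 !mulr0 ?mulr1 ?addr0.
case: k => [|j].
  rewrite qbinomSS [qbinom N.+1 1 in LHS]IH qbinomSS !qbinomn0 subn0.
  by rewrite expr1 exprS; ring.
rewrite qbinomSS [qbinom N.+1 j.+1 in LHS]IH [qbinom N.+1 j.+2 in LHS]IH.
rewrite !qbinomSS subSS.
have [jN|Nj] := ltnP j N; last first.
  rewrite !(@qbinom_small N j.+1) ?(@qbinom_small N j.+2) ?ltnS ?(leqW Nj) //.
  ring.
rewrite !mulrDr !mulrA -!exprD.
have -> : (j.+2 + (N - j.+1) = N - j + j.+1)%N by lia.
ring.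
Qed.

Definition qpoch (b K : nat) : R := \prod_(i < K) (1 - Q ^+ (b + i).+1).

Lemma qpochS b K : qpoch b K.+1 = qpoch b K * (1 - Q ^+ (b + K).+1).
Proof. by rewrite /qpoch big_ord_recr. Qed.

Lemma qpochSl b K : qpoch b K.+1 = (1 - Q ^+ b.+1) * qpoch b.+1 K.
Proof. by rewrite /qpoch big_ord_recl addn0; under eq_bigr do rewrite addnS. Qed.

Lemma qpochD b K J : qpoch b (K + J) = qpoch b K * qpoch (b + K) J.
Proof.
elim: J => [|J IH]; first by rewrite addn0 /qpoch big_ord0 mulr1.
by rewrite addnS !qpochS IH addnA mulrA.
Qed.

Lemma qbinom_qpoch N k :
  (k <= N)%N -> qbinom N k * qpoch 0 (N - k) = qpoch k (N - k).
Proof.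
elim: N k => [|N IH] [|k] //; rewrite ?qbinomn0 ?mul1r // ltnS subSS => kN.
case: ltngtP kN => [kN _|//|-> _]; last first.
  by rewrite qbinomnn subnn /qpoch !big_ord0 mulr1.
have e1 := IH k (ltnW kN); have e2 := IH k.+1 kN.
rewrite -(subnSK kN) in e1 *; set M := (N - k.+1)%N in e1 e2 *.
rewrite qbinomSS mulrDl e1 qpochSl [qpoch 0 _]qpochS add0n.
have -> : Q ^+ k.+1 * qbinom N k.+1 * (qpoch 0 M * (1 - Q ^+ M.+1)) =
          Q ^+ k.+1 * (qbinom N k.+1 * qpoch 0 M) * (1 - Q ^+ M.+1) by ring.
by rewrite e2 qpochS -addnS exprD; ring.
Qed.

Definition jacobi_poly (m r : nat) : {poly R} :=
  \prod_(i < m) ('X + (Q ^+ i.+1)%:P) * \prod_(i < r) (1 + (Q ^+ i)%:P * 'X).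

Lemma coef_jacobi_poly0 m k : (jacobi_poly m 0)`_k = Q ^+ tri_exp m k * qbinom m k.
Proof.
rewrite /jacobi_poly big_ord0 mulr1.
elim: m k => [|m IH] k.
  by rewrite big_ord0 coef1 /tri_exp; case: k => [|[|k]]; rewrite /= ?mulr1 ?mulr0.
rewrite big_ord_recr /= mulrDr coefD coefMX coefMC; case: k => [|k] /=.
  by rewrite add0r IH !qbinomn0 !mulr1 tri_expS0 exprD.
rewrite !IH tri_expSS mulrDr; congr (_ + _).
rewrite mulrAC mulrA -!exprD; congr (_ * _); congr (_ ^+ _).
by have := tri_expS m k; lia.
Qed.

Lemma coef_jacobi_poly m r k :
  (jacobi_poly m r)`_k = Q ^+ tri_exp m k * qbinom (m + r) k.
Proof.
elim: r k => [|r IH] k; first by rewrite coef_jacobi_poly0 addn0.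
have -> : jacobi_poly m r.+1 = jacobi_poly m r * (1 + (Q ^+ r)%:P * 'X).
  by rewrite /jacobi_poly big_ord_recr /= mulrA.
rewrite mulrDr mulr1 mulrA coefD coefMX coefMC addnS.
case: k => [|k] /=; first by rewrite addr0 IH !qbinomn0.
rewrite !IH -qbinomSS qbinomSS_rev mulrDr addrC; congr (_ + _).
have [km|mk] := leqP k (m + r); last by rewrite qbinom_small // !mulr0 mul0r.
rewrite mulrAC mulrA -!exprD; congr (_ * _); congr (_ ^+ _).
by have := tri_expS m k; lia.
Qed.

End QBinomial.

Section EulerProducts.
Context {R : comNzRingType}.

Definition four_geom (L : nat) : {poly R} := \prod_(i < L) \sum_(j < 4) 'X^(i.+1 * j).

Definition odd_qpoch (M : nat) : {poly R} := \prod_(i < M) (1 - 'X^(i.*2.+1)).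

Lemma qpochX_double M :
  qpoch 'X 0 M.*2 = odd_qpoch M * qpoch ('X^2 : {poly R}) 0 M.
Proof.
rewrite /qpoch /odd_qpoch (big_ord_double _ _ (fun i => 1 - 'X ^+ (0 + i).+1)).
rewrite -big_split; apply: eq_bigr => i _ /=.
by rewrite !add0n -exprM; congr (_ * (1 - GRing.exp _ _)); lia.
Qed.

Lemma odd_qpoch_double n : odd_qpoch n.*2 =
  \prod_(i < n) ((1 - 'X^((4 * i).+1)) * (1 - 'X^(4 * i + 3))).
Proof.
rewrite /odd_qpoch (big_ord_double _ _ (fun i => 1 - 'X^(i.*2.+1))).
apply: eq_bigr => i _.
by rewrite -!muln2 -mulnA; congr ((1 - GRing.exp _ _) * (1 - GRing.exp _ _)); lia.
Qed.

Lemma qpochXn_upto1 M c b K : (M < c * b.+1)%N ->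
  eq_upto M (qpoch ('X^c : {poly R}) b K) 1.
Proof.
move=> Mcb; elim: K => [|K IH]; first by rewrite /qpoch big_ord0.
rewrite qpochS -exprM -[X in eq_upto _ _ X]mulr1; apply: eq_uptoM => //.
by apply: eq_upto_1subXn; apply: leq_trans Mcb _; rewrite leq_mul2l ltnS leq_addr orbT.
Qed.

Lemma qpochXn_upto M c b K L : (L <= K)%N -> (M < c * (b + L).+1)%N ->
  eq_upto M (qpoch ('X^c : {poly R}) b K) (qpoch 'X^c b L).
Proof.
move=> LK ML; rewrite -(subnKC LK) qpochD -[X in eq_upto _ _ X]mulr1.
by apply: eq_uptoM => //; apply: qpochXn_upto1.
Qed.

Lemma qbinom_qpoch_upto M c N k : (k <= N)%N -> (M < c * (minn k (N - k)).+1)%N ->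
  eq_upto M (qbinom ('X^c : {poly R}) N k * qpoch 'X^c 0 N) 1.
Proof.
move=> kN ML; have := qpochD ('X^c : {poly R}) 0 (N - k) k.
rewrite add0n subnK // => ->; rewrite mulrA qbinom_qpoch // -[X in eq_upto _ _ X]mulr1.
by apply: eq_uptoM; apply: qpochXn_upto1; apply: (leq_trans ML);
  rewrite leq_mul2l ltnS ?geq_minl ?geq_minr orbT.
Qed.

End EulerProducts.

Section Char2.
Local Notation F2X := {poly 'F_2}.

Let pchar2 : 2 \in [pchar F2X].
Proof. by rewrite pchar_poly; apply: pchar_Fp. Qed.

Lemma four_geom_F2 L : four_geom L = qpoch 'X 0 L * qpoch ('X^2 : F2X) 0 L.
Proof.
rewrite /four_geom /qpoch -big_split; apply: eq_bigr => i _ /=.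
rewrite !big_ord_recr big_ord0 /= add0r !add0n !GRing.subr_pchar2 // !exprM.
by rewrite expr0 [X in _ * (_ + X)]exprAC; ring.
Qed.

Lemma sqr_qpoch (Q : F2X) b K : qpoch Q b K ^+ 2 = qpoch (Q ^+ 2) b K.
Proof.
rewrite /qpoch -prodrXl; apply: eq_bigr => i _.
by rewrite sqrrB mulrn_pchar // subr0 expr1n exprAC GRing.subr_pchar2.
Qed.

Lemma horner_jacobi_poly_X4 n :
  (jacobi_poly ('X^4 : F2X) n n).['X^3] = 'X^(3 * n) * odd_qpoch n.*2.
Proof.
rewrite /jacobi_poly hornerM !horner_prod odd_qpoch_double big_split /= mulrA.
congr (_ * _).
  rewrite (eq_bigr (fun i : 'I_n => 'X^3 * (1 - 'X^((4 * i).+1)))) => [|i _].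
    by rewrite big_split prodr_const card_ord -exprM mulnC.
  rewrite !hornerE -exprM GRing.subr_pchar2 // mulrDr mulr1 -exprD.
  by congr (_ + GRing.exp _ _); lia.
apply: eq_bigr => i _; rewrite hornerD hornerC hornerCM hornerX -exprM -exprD.
by rewrite GRing.subr_pchar2.
Qed.

Lemma four_geom_upto L :
  eq_upto L (four_geom L) (odd_qpoch L.*2 * qpoch ('X^4 : F2X) 0 L.*2).
Proof.
have -> : qpoch ('X^4 : F2X) 0 L.*2 = qpoch 'X^2 0 L.*2 * qpoch 'X^2 0 L.*2.
  by rewrite -expr2 sqr_qpoch -exprM.
rewrite mulrA -qpochX_double four_geom_F2.
apply: eq_uptoM; apply: eq_upto_sym.
  by apply: (@qpochXn_upto _ _ 1); lia.
by apply: qpochXn_upto; lia.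
Qed.

Lemma four_geom_coef_triangular L s : (s <= L)%N -> (four_geom L)`_s != 0 :> 'F_2 ->
  exists c : int, s%:Z = 2 * c * c + c.
Proof.
move=> sL; rewrite (four_geom_upto sL) => nz.
set E := qpoch ('X^4 : F2X) 0 L.*2; set P := jacobi_poly ('X^4 : F2X) L L.
have jac : 'X^(3 * L) * (odd_qpoch L.*2 * E) =
    \sum_(k < size P) 'X^(4 * tri_exp L k + 3 * k) * (qbinom 'X^4 L.*2 k * E).
  rewrite mulrA -horner_jacobi_poly_X4 horner_coef mulr_suml; apply: eq_bigr => k _.
  by rewrite coef_jacobi_poly addnn exprD !exprM; ring.
have : ('X^(3 * L) * (odd_qpoch L.*2 * E))`_(s + 3 * L) != 0.
  by rewrite coefXnM ltnNge leq_addl addnK.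
rewrite jac coef_sum => /sumr_neq0_exists[k].
(* The k-th term is X^(4 tri_exp L k + 3k) times a series equal to 1 up to
   degree 4 min(k, 2L - k) + 3, and that range covers degree s + 3L. *)
rewrite coefXnM; case: ltnP => // le_e nzk.
have kL : (k <= L.*2)%N.
  rewrite leqNgt; apply: contraNN nzk => Lk.
  by rewrite qbinom_small // mul0r coef0.
move: nzk; rewrite (qbinom_qpoch_upto kL _ (leqnn _)); last first.
  by have := tri_exp_double L k; nia.
rewrite coef1; case: (@eqP _ (s + 3 * L - _)%N 0%N) => [d0 _|_ /eqP[]//].
by exists (k%:Z - L%:Z); have := tri_exp_double L k; nia.
Qed.

End Char2.

Lemma coef_compXnM_neq0 (R : comNzRingType) (P S : {poly R}) d e N :
  (0 < d)%N -> (0 < e)%N -> ((P \Po 'X^d) * (S \Po 'X^e))`_N != 0 ->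
  exists s u, P`_s != 0 /\ (s * d + u * e)%N = N.
Proof.
move=> d0 e0; rewrite coefM => /sumr_neq0_exists[[j /= jN]].
rewrite !coef_comp_poly_Xn //.
case: dvdnP => [[s js]|_]; last by rewrite mul0r eqxx.
case: dvdnP => [[u ju]|_]; last by rewrite mulr0 eqxx.
rewrite js mulnK // => nz; exists s, u; split.
  by apply: contraNneq nz => ->; rewrite mul0r.
by rewrite -ju -js subnKC // -ltnS.
Qed.

Lemma admissible_mult_inj p r a J j1 j2 k1 k2 :
  coprime a p -> (J <= p)%N -> (j1 < J)%N -> (j2 < J)%N ->
  (j1 * (p * r + a) + p * k1 = j2 * (p * r + a) + p * k2)%N -> j1 = j2 /\ k1 = k2.
Proof.
move=> ap Jp; wlog j21 : j1 j2 k1 k2 / (j2 <= j1)%N => [sym|] lt1 lt2 E.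
  have [/sym|/ltnW/sym] := leqP j2 j1; first exact.
  by move=> /(_ k2 k1 lt2 lt1 (esym E)) [-> ->].
move: lt1 E; rewrite -(subnK j21); move: (j1 - j2)%N => d lt1 E.
have p_d : (p %| d)%N.
  have : (p %| d * a + p * (k1 + d * r))%N.
    suff -> : (d * a + p * (k1 + d * r) = p * k2)%N by apply: dvdn_mulr.
    by lia.
  by rewrite (dvdn_addl _ (dvdn_mulr _ (dvdnn p))) Gauss_dvdl // coprime_sym.
have d0 : d = 0%N by move: p_d; rewrite /dvdn modn_small; lia.
by move: E; rewrite d0 add0n => /eqP; rewrite eqn_add2l eqn_mul2l; lia.
Qed.

Section AdmissibleGenerating.
Context {R : comNzRingType} (p r a m : nat).

Definition admissible_gen (d N : nat) : {poly R} :=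
  \sum_(c < N.+1 | admissible_mult p r a m c) 'X^(d * c).

Lemma b4_coef_prod N : (b4 p r a m N)%:R = (\prod_(i < N) admissible_gen i.+1 N)`_N.
Proof.
rewrite /admissible_gen; under eq_bigr do rewrite big_mkcond /=.
rewrite bigA_distr_bigA coef_sum /b4 -sum1_card natr_sum big_mkcond /=.
apply: eq_bigr => f _; rewrite inE.
case: (boolP [forall i, admissible_mult p r a m (f i)]).
  move=> /forallP adm.
  rewrite (eq_bigr (fun i : 'I_N => 'X^(i.+1 * f i))) => [|i _]; last by rewrite adm.
  by rewrite prodrXr coefXn andbT eq_sym; case: eqP.
move=> /forallPn[i nadm].
by rewrite andbF (bigD1 i) //= (negbTE nadm) mul0r coef0.
Qed.

Lemma admissible_gen_upto d N : coprime a p -> (4 <= p)%N -> (0 < d)%N ->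
  eq_upto N (admissible_gen d N)
    (((\sum_(j < 4) 'X^(d * j)) \Po 'X^(p * r + a)) *
     ((\sum_(k < m) 'X^(d * k)) \Po 'X^p)).
Proof.
move=> ap p4 d0; pose phi (jk : 'I_4 * 'I_m) := (jk.1 * (p * r + a) + p * jk.2)%N.
have -> : ((\sum_(j < 4) 'X^(d * j)) \Po ('X^(p * r + a) : {poly R})) *
    ((\sum_(k < m) 'X^(d * k)) \Po 'X^p) = \sum_jk 'X^(d * phi jk).
  rewrite !rmorph_sum /= mulr_suml -(pair_bigA _ (fun j k => 'X^(d * phi (j, k)))).
  apply: eq_bigr => j _.
  rewrite mulr_sumr; apply: eq_bigr => k _.
  by rewrite !comp_Xn_poly -!exprM -exprD /phi; congr (_ ^+ _); ring.
rewrite (bigID (fun jk => phi jk <= N)%N) /= -[admissible_gen d N]addr0.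
apply: eq_uptoD => [|k kN]; last first.
  rewrite coef0 coef_sum big1 // => jk; rewrite -ltnNge => Nphi.
  by rewrite coefXn ltn_eqF // (leq_ltn_trans kN) // (leq_trans Nphi) ?leq_pmull.
rewrite /admissible_gen (partition_big (fun jk => inord (phi jk) : 'I_N.+1) xpredT) //=.
apply: eq_upto_sym; rewrite [X in eq_upto _ _ X]big_mkcond /=.
apply: eq_upto_sum => c _; rewrite (eq_bigr (fun=> 'X^(d * c))); last first.
  by move=> jk /andP[Nphi /eqP <-]; rewrite inordK.
case: ifP => [/existsP[j /existsP[k /eqP cjk]]|nadm].
  rewrite (big_pred1 (j, k)) // => -[j' k'] /=.
  apply/andP/eqP => [[Nphi /eqP/(congr1 val)]|[-> ->]]; last first.
    by rewrite /phi /= -cjk inord_val -ltnS ltn_ord.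
  rewrite /= inordK // cjk /phi /=.
  by move=> /(admissible_mult_inj ap p4 (ltn_ord _) (ltn_ord _))[/val_inj-> /val_inj->].
rewrite big_pred0 // => -[j k]; apply: contraFF nadm => /andP[Nphi /eqP <-].
by rewrite /admissible_mult inordK //; apply/existsP; exists j; apply/existsP; exists k.
Qed.

Lemma b4_coef_comp N : coprime a p -> (4 <= p)%N ->
  (b4 p r a m N)%:R = (((four_geom N : {poly R}) \Po 'X^(p * r + a)) *
     ((\prod_(i < N) \sum_(k < m) 'X^(i.+1 * k)) \Po 'X^p))`_N.
Proof.
move=> ap p4.
have factors_upto (i : 'I_N) := admissible_gen_upto (N := N) ap p4 (ltn0Sn i).
rewrite b4_coef_prod (eq_upto_prod _ (fun i _ => factors_upto i) (leqnn N)).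
by rewrite big_split /= -!rmorph_prod.
Qed.

End AdmissibleGenerating.

Lemma odd_b4_triangular p r a m N : coprime a p -> (4 <= p)%N -> (0 < a)%N ->
  odd (b4 p r a m N) ->
  exists s u (c : int), (s * (p * r + a) + u * p)%N = N /\ s%:Z = 2 * c * c + c.
Proof.
move=> ap p4 a0 oddb.
have : (b4 p r a m N)%:R != 0 :> 'F_2.
  by rewrite -(dvdn_pcharf (pchar_Fp (isT : prime 2))) dvdn2 oddb.
rewrite (b4_coef_comp (R := 'F_2) r m N ap p4).
move=> /coef_compXnM_neq0[||s [u [nz sN]]]; try lia.
have [|c sc] := four_geom_coef_triangular _ nz; first by nia.
by exists s, u, c.
Qed.

Theorem theorem4p3 (p a r m : nat) (t : int) :
  prime p -> (5 <= p)%N -> (0 < a)%N -> coprime a p -> (1 <= m)%N ->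
  ~~ [exists x : 'F_p, x ^+ 2 == (8%:R * t%:~R * (a%:R)^-1 + 1 : 'F_p)] ->
  forall n : nat, ~~ odd (b4z p r a m (p%:Z * n%:Z + t)).
Proof.
move=> p_pr p5 a0 ap _ nonres n.
case eN: (p%:Z * n%:Z + t) => [N|//] /=; apply/negP => oddN.
have [s [u [c [sN sc]]]] := odd_b4_triangular ap (ltnW p5) a0 oddN.
have a_nz : a%:R != 0 :> 'F_p.
  by rewrite -(dvdn_pcharf (pchar_Fp p_pr)) -prime_coprime // coprime_sym.
have t_sa : t%:~R = s%:R * a%:R :> 'F_p.
  have -> : t = (s * a)%N%:Z + p%:Z * (s%:Z * r%:Z + u%:Z - n%:Z) by lia.
  have p0 : (p%:Z)%:~R = 0 :> 'F_p := pchar_Fp_0 p_pr.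
  by rewrite intrD intrM -natrM p0 mul0r addr0.
apply: (negP nonres); apply/existsP; exists (4 * c + 1)%:~R.
rewrite t_sa -mulrA mulfK // -[s%:R]/((s%:Z)%:~R) sc.
by apply/eqP; rewrite !(rmorphD, rmorphM) /=; ring.
Qed.
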